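(* Let $n\ge 1$ and let $P'$, $P''$ be two probability distributions on $\mathfrak{S}_n$. For $i<j$ put $p'_{i,j}=\mathbb{P}_{\Sigma\sim P'}\{\Sigma(i)<\Sigma(j)\}$ and $p''_{i,j}=\mathbb{P}_{\Sigma\sim P''}\{\Sigma(i)<\Sigma(j)\}$. (i) Let $\sigma_{P''}$ be any Kemeny median of $P''$. Then $$L^*_{P'}\le L_{P'}(\sigma_{P''})\le L^*_{P'}+2\sum_{i<j}|p'_{i,j}-p''_{i,j}|.$$ (ii) Suppose that $P'\in\mathcal{T}$ and $P''\in\mathcal{T}$, and set $h=\min_{i<j}|p''_{i,j}-1/2|$. Then $$d_\tau(\sigma^*_{P'},\sigma^*_{P''})\le \frac{1}{h}\sum_{i<j}|p'_{i,j}-p''_{i,j}|.$$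
   Context: $\mathfrak{S}_n$ is the set of permutations of $[n]=\{1,\dots,n\}$. A ranking is a permutation $\sigma$, where $\sigma(i)$ is the rank of item $i$. The Kendall $\tau$ distance is $d_\tau(\sigma,\sigma')=\sum_{i<j}\mathbb{I}\{(\sigma(i)-\sigma(j))(\sigma'(i)-\sigma'(j))<0\}$. For a probability distribution $P$ on $\mathfrak{S}_n$ and $\Sigma\sim P$, set $L_P(\sigma)=\mathbb{E}_{\Sigma\sim P}[d_\tau(\Sigma,\sigma)]$ and $L_P^*=\min_{\sigma\in\mathfrak{S}_n}L_P(\sigma)$. A Kemeny median of $P$ is any minimizer of $L_P$. The pairwise probabilities of $P$ are $p_{i,j}=\mathbb{P}\{\Sigma(i)<\Sigma(j)\}$. $P$ is strictly stochastically transitive if (a) for all $i,j,k\in[n]$, $p_{i,j}\ge1/2$ and $p_{j,k}\ge 1/2$ imply $p_{i,k}\ge 1/2$, and (b) $p_{i,j}\ne 1/2$ for all $i<j$. $\mathcal{T}$ denotes the set of strictly stochastically transitive distributions on $\mathfrak{S}_n$. For $P\in\mathcal{T}$ the Kemeny median is unique; it is denoted $\sigma^*_P$ and equals $\sigma^*_P(i)=1+\sum_{k\ne i}\mathbb{I}\{p_{i,k}<1/2\}$. *)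

(* Rankings of [n] are permutations of 'I_n (0-based ranks). *)
From HB Require Import structures.
From mathcomp Require Import all_boot all_order all_algebra all_fingroup.
Set Implicit Arguments. Unset Strict Implicit. Unset Printing Implicit Defensive.
Import Order.TTheory GRing.Theory Num.Theory.
Local Open Scope ring_scope.

Definition kendall (n : nat) (s t : 'S_n) : nat :=
  (\sum_(i : 'I_n) \sum_(j : 'I_n | (i < j)%N)
     ((((s i)%:Z - (s j)%:Z) * ((t i)%:Z - (t j)%:Z)) < 0)%R : nat)%N.

Definition is_distr (R : realFieldType) (n : nat) (P : {ffun 'S_n -> R}) : Prop :=
  (forall s, 0 <= P s) /\ \sum_(s : 'S_n) P s = 1.

Definition risk (R : realFieldType) (n : nat) (P : {ffun 'S_n -> R}) (sg : 'S_n) : R :=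
  \sum_(s : 'S_n) P s * (kendall s sg)%:R.

(* L*_P = min over sigma of L_P(sigma) (the index risk P 1 is itself attained) *)
Definition opt_risk (R : realFieldType) (n : nat) (P : {ffun 'S_n -> R}) : R :=
  \big[Num.min/risk P 1]_(sg : 'S_n) risk P sg.

Definition kemeny_median (R : realFieldType) (n : nat) (P : {ffun 'S_n -> R}) (sg : 'S_n) : Prop :=
  forall tau : 'S_n, risk P sg <= risk P tau.

Definition pairprob (R : realFieldType) (n : nat) (P : {ffun 'S_n -> R}) (i j : 'I_n) : R :=
  \sum_(s : 'S_n | (s i < s j)%N) P s.

Definition strictly_sst (R : realFieldType) (n : nat) (P : {ffun 'S_n -> R}) : Prop :=
  (forall i j k : 'I_n, 1/2 <= pairprob P i j -> 1/2 <= pairprob P j k ->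
      1/2 <= pairprob P i k) /\
  (forall i j : 'I_n, (i < j)%N -> pairprob P i j != 1/2).

Definition pair_l1 (R : realFieldType) (n : nat) (P1 P2 : {ffun 'S_n -> R}) : R :=
  \sum_(i : 'I_n) \sum_(j : 'I_n | (i < j)%N) `|pairprob P1 i j - pairprob P2 i j|.

(* h = min_{i<j} |p_{i,j} - 1/2|; the neutral element 1 is never attained
   when n >= 2 (all values are <= 1/2), and for n = 1 the bound is trivial. *)
Definition margin (R : realFieldType) (n : nat) (P : {ffun 'S_n -> R}) : R :=
  \big[Num.min/1]_(i : 'I_n) \big[Num.min/1]_(j : 'I_n | (i < j)%N) `|pairprob P i j - 1/2|.

(** Both the Kemeny risk and the Kendall distance split into sums over the
    pairs [i < j]: a ranking [t] pays [P{Σ ranks the pair opposite to t}] on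
    each pair, and this loss moves by exactly [|p'_ij - p''_ij|] when the
    distribution changes.  Hence the risks under [P'] and [P''] differ by at
    most [Σ |p'_ij - p''_ij|] uniformly, which gives (i).  Under strict
    stochastic transitivity, ranking items by the number of items that beat
    them in pairwise majority pays the smaller of [p_ij], [1 - p_ij] on every
    pair, so any Kemeny median must follow the majority on every pair.  Two
    medians then disagree on a pair only if [1/2] separates [p'_ij] from
    [p''_ij], in which case [h <= |p''_ij - 1/2| <= |p'_ij - p''_ij|]. *)

From HB Require Import structures.
From mathcomp Require Import all_boot all_order all_algebra all_fingroup.
From mathcomp Require Import lra.
Import Order.TTheory GRing.Theory Num.Theory.
Local Open Scope ring_scope.
Set Implicit Arguments. Unset Strict Implicit. Unset Printing Implicit Defensive.

Lemma mulz_subn_lt0 (a b c d : nat) : a != b -> c != d ->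
  ((a%:Z - b%:Z) * (c%:Z - d%:Z) < 0) = ((a < b)%N != (c < d)%N).
Proof.
move=> neq_ab neq_cd.
by rewrite mulr_lt0 !subr_eq0 !eqz_nat neq_ab neq_cd !subr_lt0 !ltz_nat negb_eqb.
Qed.

Lemma ler_threshold_dist (R : realDomainType) (a b c h : R) :
  h <= `|b - c| -> ((c < a) != (c < b))%:R * h <= `|a - b|.
Proof.
move=> h_le; case: (ltP c a) => ca; case: (ltP c b) => cb /=;
  rewrite ?mul0r ?mul1r ?normr_ge0 //; apply: le_trans h_le _.
- by rewrite (ler0_norm (_ : b - c <= 0)) ?(ger0_norm (_ : 0 <= a - b)); lra.
- by rewrite (ger0_norm (_ : 0 <= b - c)) ?(ler0_norm (_ : a - b <= 0)); lra.
Qed.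

Section PairwiseRisk.
Variables (R : realFieldType) (n : nat).
Implicit Types (P : {ffun 'S_n -> R}) (s t : 'S_n) (i j : 'I_n).

Lemma perm_nltn s i j : i != j -> (~~ (s i < s j)%N) = (s j < s i)%N.
Proof.
move=> neq_ij; rewrite -leqNgt leq_eqVlt val_eqE (inj_eq perm_inj).
by rewrite eq_sym (negbTE neq_ij).
Qed.

Lemma kendallE s t : kendall s t =
  (\sum_(i : 'I_n) \sum_(j : 'I_n | (i < j)%N)
     (((s i < s j)%N != (t i < t j)%N) : nat))%N.
Proof.
apply: eq_bigr => i _; apply: eq_bigr => j lt_ij.
have neq_ij : i != j by rewrite neq_ltn lt_ij.
by rewrite mulz_subn_lt0 // val_eqE (inj_eq perm_inj).
Qed.

Definition pair_loss P t i j : R :=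
  if (t i < t j)%N then pairprob P j i else pairprob P i j.

Lemma risk_pairwise P t :
  risk P t = \sum_(i : 'I_n) \sum_(j : 'I_n | (i < j)%N) pair_loss P t i j.
Proof.
rewrite /risk; under eq_bigr => s _ do rewrite kendallE natr_sum mulr_sumr.
rewrite exchange_big; apply: eq_bigr => i _.
under eq_bigr => s _ do rewrite natr_sum mulr_sumr.
rewrite exchange_big; apply: eq_bigr => j lt_ij.
have neq_ij : i != j by rewrite neq_ltn lt_ij.
rewrite /pair_loss /pairprob; case: ifP => _; rewrite [RHS]big_mkcond;
  apply: eq_bigr => s _ /=.
- by rewrite eqb_id perm_nltn //; case: ifP; rewrite ?mulr1 ?mulr0.
- by rewrite eqbF_neg negbK; case: ifP; rewrite ?mulr1 ?mulr0.
Qed.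

Lemma pairprob_diag P i : pairprob P i i = 0.
Proof. by rewrite /pairprob big_pred0 // => s; rewrite ltnn. Qed.

Lemma pairprobC P i j : \sum_s P s = 1 -> i != j ->
  pairprob P j i = 1 - pairprob P i j.
Proof.
move=> mass1 neq_ij; rewrite -mass1 (bigID (fun s => (s i < s j)%N)) /= addrC addrK.
by apply: eq_bigl => s; rewrite perm_nltn.
Qed.

Lemma pair_loss_dist P1 P2 t i j : \sum_s P1 s = 1 -> \sum_s P2 s = 1 -> i != j ->
  `|pair_loss P1 t i j - pair_loss P2 t i j| = `|pairprob P1 i j - pairprob P2 i j|.
Proof.
move=> mass1 mass2 neq_ij; rewrite /pair_loss; case: ifP => // _.
rewrite (pairprobC mass1 neq_ij) (pairprobC mass2 neq_ij).
by rewrite opprB addrC addrA subrK distrC.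
Qed.

Lemma risk_dist_le P1 P2 t : \sum_s P1 s = 1 -> \sum_s P2 s = 1 ->
  `|risk P1 t - risk P2 t| <= pair_l1 P1 P2.
Proof.
move=> mass1 mass2; rewrite !risk_pairwise -sumrB.
apply: le_trans (ler_norm_sum _ _ _) _; apply: ler_sum => i _.
rewrite -sumrB; apply: le_trans (ler_norm_sum _ _ _) _; apply: ler_sum => j lt_ij.
by rewrite pair_loss_dist // neq_ltn lt_ij.
Qed.

Lemma opt_risk_le P t : opt_risk P <= risk P t.
Proof. by rewrite /opt_risk (bigD1 t) //= ge_min lexx. Qed.

Lemma opt_risk_ge P x : (forall t, x <= risk P t) -> x <= opt_risk P.
Proof.
move=> x_le; apply: (big_ind (fun y => x <= y)) => // a b xa xb.
by rewrite le_min xa xb.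
Qed.

Lemma risk_median_le P1 P2 sg : \sum_s P1 s = 1 -> \sum_s P2 s = 1 ->
  kemeny_median P2 sg -> risk P1 sg <= opt_risk P1 + 2 * pair_l1 P1 P2.
Proof.
move=> mass1 mass2 med; rewrite -lerBlDr; apply: opt_risk_ge => t.
have := risk_dist_le sg mass1 mass2; have := risk_dist_le t mass1 mass2.
rewrite !ler_distl => /andP[dist_t _] /andP[_ dist_sg].
by have := med t; lra.
Qed.

Lemma margin_le P i j : (i < j)%N -> margin P <= `|pairprob P i j - 1/2|.
Proof.
move=> lt_ij; rewrite /margin (bigD1 i) //= ge_min (bigD1 j) //= ge_min.
by rewrite lexx.
Qed.

Lemma margin_gt0 P : strictly_sst P -> 0 < margin P.
Proof.
case=> _ neq_half; have min_gt0 (a b : R) : 0 < a -> 0 < b -> 0 < Num.min a b.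
  by move=> a_gt0 b_gt0; rewrite lt_min a_gt0 b_gt0.
apply: (big_ind _ _ min_gt0) => // i _; apply: (big_ind _ _ min_gt0) => // j lt_ij.
by rewrite normr_gt0 subr_eq0 neq_half.
Qed.

End PairwiseRisk.

Section MajorityRanking.
Variables (R : realFieldType) (n : nat) (P : {ffun 'S_n -> R}).
Hypotheses (P_mass : \sum_s P s = 1) (P_sst : strictly_sst P).
Implicit Types (t : 'S_n) (i j : 'I_n).

Lemma pairprob_neq_half i j : i != j -> pairprob P i j != 1/2.
Proof.
case: P_sst => _ neq_half; rewrite neq_ltn => /orP[lt_ij | lt_ji].
  exact: neq_half.
have neq_ji : j != i by rewrite neq_ltn lt_ji.
have := neq_half _ _ lt_ji; rewrite (pairprobC P_mass neq_ji).
by apply: contra => /eqP p_half; apply/eqP; lra.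
Qed.

Lemma majorityC i j : i != j ->
  (1/2 < pairprob P j i) = ~~ (1/2 < pairprob P i j).
Proof.
move=> neq_ij; have := pairprob_neq_half neq_ij.
rewrite (pairprobC P_mass neq_ij) -leNgt le_eqVlt => /negbTE->.
by apply/idP/idP; lra.
Qed.

Definition beaten_by i := [set k | 1/2 < pairprob P k i].

Lemma beaten_by_proper i j : 1/2 < pairprob P i j -> beaten_by i \proper beaten_by j.
Proof.
move=> ij_maj; have neq_ij : i != j.
  by apply: contraTneq ij_maj => ->; rewrite pairprob_diag; lra.
apply/properP; split; last by exists i; rewrite !inE // pairprob_diag; lra.
apply/subsetP => k; rewrite !inE => ki_maj.
have neq_kj : k != j.
  by apply: contraTneq ki_maj => ->; rewrite (majorityC neq_ij) ij_maj.
case: P_sst => trans _; have := trans k i j (ltW ki_maj) (ltW ij_maj).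
by rewrite le_eqVlt eq_sym (negbTE (pairprob_neq_half neq_kj)).
Qed.

Lemma card_beaten_by_lt i : (#|beaten_by i| < n)%N.
Proof.
rewrite -[X in (_ < X)%N]card_ord -cardsT; apply: proper_card; apply/properP.
by split; [exact: subsetT | exists i; rewrite // inE pairprob_diag; lra].
Qed.

Definition majority_rank i : 'I_n := Ordinal (card_beaten_by_lt i).

Lemma majority_rank_ltn i j : i != j ->
  (majority_rank i < majority_rank j)%N = (1/2 < pairprob P i j).
Proof.
move=> neq_ij; case: (boolP (1/2 < pairprob P i j)) => [ij_maj | ].
  exact: proper_card (beaten_by_proper ij_maj).
rewrite -(majorityC neq_ij) => /beaten_by_proper/proper_card ji_lt.
by apply/negbTE; rewrite -leqNgt ltnW.
Qed.

Lemma majority_rank_inj : injective majority_rank.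
Proof.
move=> i j eq_rank; apply/eqP; apply: contraT => neq_ij.
have neq_ji : j != i by rewrite eq_sym.
have := majority_rank_ltn neq_ij; have := majority_rank_ltn neq_ji.
by rewrite eq_rank ltnn (majorityC neq_ij); case: (1/2 < pairprob P i j).
Qed.

Definition majority_ranking : 'S_n := perm majority_rank_inj.

Lemma pair_loss_majority t i j : i != j ->
  pair_loss P majority_ranking i j <= pair_loss P t i j
    ?= iff ((t i < t j)%N == (1/2 < pairprob P i j)).
Proof.
move=> neq_ij; rewrite /pair_loss !permE majority_rank_ltn //.
rewrite (pairprobC P_mass neq_ij).
have := pairprob_neq_half neq_ij; rewrite neq_lt => /orP p_neq_half.
case: (t i < t j)%N; case: ltP => p_maj; split; rewrite /= ?eqxx ?lexx //; try lra.
all: by apply/negbTE/eqP => p_eq; case: p_neq_half; lra.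
Qed.

Lemma risk_majority t :
  risk P majority_ranking <= risk P t
    ?= iff [forall i : 'I_n, forall (j : 'I_n | (i < j)%N),
              (t i < t j)%N == (1/2 < pairprob P i j)].
Proof.
rewrite !risk_pairwise; apply: leif_sum => i _; apply: leif_sum => j lt_ij.
by apply: pair_loss_majority; rewrite neq_ltn lt_ij.
Qed.

Lemma kemeny_median_majority sg : kemeny_median P sg ->
  forall i j, (i < j)%N -> (sg i < sg j)%N = (1/2 < pairprob P i j).
Proof.
move=> med i j lt_ij; have [risk_le] := risk_majority sg.
rewrite eq_le risk_le med => /esym/forallP/(_ i)/forall_inP/(_ j lt_ij).
by move/eqP.
Qed.

End MajorityRanking.

Theorem lemma4 (R : realFieldType) (n : nat) (hn : (0 < n)%N)
    (P1 P2 : {ffun 'S_n -> R}) (hP1 : is_distr P1) (hP2 : is_distr P2) :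
  (forall sg2 : 'S_n, kemeny_median P2 sg2 ->
     opt_risk P1 <= risk P1 sg2 /\
     risk P1 sg2 <= opt_risk P1 + 2 * pair_l1 P1 P2) /\
  (strictly_sst P1 -> strictly_sst P2 ->
   forall sg1 sg2 : 'S_n, kemeny_median P1 sg1 -> kemeny_median P2 sg2 ->
     (kendall sg1 sg2)%:R <= pair_l1 P1 P2 / margin P2).
Proof.
case: hP1 hP2 => _ mass1 [_ mass2].
split=> [sg2 med2 | sst1 sst2 sg1 sg2 med1 med2].
  by split; [exact: opt_risk_le | exact: risk_median_le med2].
rewrite ler_pdivlMr ?margin_gt0 // kendallE natr_sum mulr_suml.
apply: ler_sum => i _; rewrite natr_sum mulr_suml; apply: ler_sum => j lt_ij.
rewrite (kemeny_median_majority mass1 sst1 med1 lt_ij).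
rewrite (kemeny_median_majority mass2 sst2 med2 lt_ij).
exact/ler_threshold_dist/margin_le.
Qed.
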